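(* For any nonempty set $X$, the free inverse monoid $\operatorname{FIM}(X)$, regarded as an $F$-inverse monoid, is not finitely presented: there are no finite set $Y$ and finite relation $R$ on $\mathbb{I}\mathfrak{m}_Y$ such that $\operatorname{FInv}\langle Y\mid R\rangle\cong\operatorname{FIM}(X)$ as $F$-inverse monoids.
   Context: $F$-inverse monoids are inverse monoids in which each $\sigma$-class has a greatest element $s^{\mathfrak m}$; they form a variety in signature $(\cdot,1,{}^{-1},{}^{\mathfrak m})$. $\operatorname{FIM}(X)$ is $F$-inverse, with $(w_{\operatorname{FIM}(X)})^{\mathfrak m}$ equal to the value of the freely reduced form of $w$. $\mathbb{I}\mathfrak{m}_Y$ is the set of terms $u_0v_1^{\mathfrak m}u_1\cdots v_n^{\mathfrak m}u_n$ with $u_i,v_i\in(Y\cup Y^{-1})^*$, and $\operatorname{FInv}\langle Y\mid R\rangle$ is the quotient of the free $F$-inverse monoid on $Y$ by the congruence generated by $R$. *)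

From mathcomp Require Import all_boot.
Set Implicit Arguments. Unset Strict Implicit. Unset Printing Implicit Defensive.

Record InvMon := {
  icar :> Type;
  imul : icar -> icar -> icar;
  ione : icar;
  iinv : icar -> icar;
  imulA : forall x y z, imul x (imul y z) = imul (imul x y) z;
  imul1l : forall x, imul ione x = x;
  imul1r : forall x, imul x ione = x;
  iinv_reg : forall x, imul (imul x (iinv x)) x = x;
  iinv_reg' : forall x, imul (imul (iinv x) x) (iinv x) = iinv x;
  iidem_comm : forall e f, imul e e = e -> imul f f = f -> imul e f = imul f e
}.

Definition nat_le (M : InvMon) (s t : M) : Prop :=
  s = imul (imul s (iinv s)) t.
Definition sigma_rel (M : InvMon) (s t : M) : Prop :=
  exists e : M, imul e e = e /\ imul e s = imul e t.

Record FInvMon := {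
  fbase :> InvMon;
  fm : fbase -> fbase;
  fm_sigma : forall s, sigma_rel s (fm s);
  fm_greatest : forall s t, sigma_rel s t -> nat_le t (fm s)
}.

Definition invmon_morph (M N : InvMon) (h : M -> N) : Prop :=
  (forall x y, h (imul x y) = imul (h x) (h y)) /\ h (ione M) = ione N /\
  (forall x, h (iinv x) = iinv (h x)).

Definition is_free_inverse_monoid (X : Type) (M : InvMon) (iota : X -> M) : Prop :=
  forall (N : InvMon) (f : X -> N),
    (exists h : M -> N, invmon_morph h /\ forall x, h (iota x) = f x) /\
    (forall h1 h2 : M -> N, invmon_morph h1 -> invmon_morph h2 ->
       (forall x, h1 (iota x) = f x) -> (forall x, h2 (iota x) = f x) ->
       forall m, h1 m = h2 m).

Inductive fterm (Y : Type) :=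
| tvar of Y
| tmul of fterm Y & fterm Y
| tone
| tinv of fterm Y
| tm of fterm Y.
Arguments tone {Y}.

Fixpoint feval (Y : Type) (M : FInvMon) (v : Y -> M) (t : fterm Y) : M :=
  match t with
  | tvar y => v y
  | tmul a b => imul (feval v a) (feval v b)
  | tone => ione M
  | tinv a => iinv (feval v a)
  | tm a => fm (feval v a)
  end.

(* words over Y u Y^-1 : a letter (y, false) is y, (y, true) is y^-1 *)
Definition word (Y : Type) := seq (Y * bool).
Definition letter_term (Y : Type) (a : Y * bool) : fterm Y :=
  if a.2 then tinv (tvar a.1) else tvar a.1.
Definition word_term (Y : Type) (w : word Y) : fterm Y :=
  foldr (fun a t => tmul (letter_term a) t) tone w.

(* elements of Im_Y : u0 v1^m u1 ... vn^m un, encoded as (u0, [(v1,u1);...;(vn,un)]) *)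
Definition imterm (Y : Type) := (word Y * seq (word Y * word Y))%type.
Definition im_to_term (Y : Type) (p : imterm Y) : fterm Y :=
  tmul (word_term p.1)
    (foldr (fun vu t => tmul (tm (word_term vu.1)) (tmul (word_term vu.2) t)) tone p.2).

(* the congruence generated by R on the free F-inverse monoid over Y:
   s ~ t iff s = t holds in every F-inverse monoid under every assignment satisfying R *)
Definition finv_cong (Y : eqType) (R : seq (imterm Y * imterm Y)) (s t : fterm Y) : Prop :=
  forall (M : FInvMon) (v : Y -> M),
    (forall r, r \in R -> feval v (im_to_term r.1) = feval v (im_to_term r.2)) ->
    feval v s = feval v t.

(* phi : fterm Y -> M induces an isomorphism of F-inverse monoids
   FInv<Y | R> = fterm Y / finv_cong R  ~=  M *)
Definition finv_pres_iso (Y : eqType) (R : seq (imterm Y * imterm Y)) (M : FInvMon)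
    (phi : fterm Y -> M) : Prop :=
  (forall a b, phi (tmul a b) = imul (phi a) (phi b)) /\
  phi tone = ione M /\
  (forall a, phi (tinv a) = iinv (phi a)) /\
  (forall a, phi (tm a) = fm (phi a)) /\
  (forall s t, phi s = phi t <-> finv_cong R s t) /\
  (forall m : M, exists t, phi t = m).

(* Let pi : FIM(X) -> FG(X) be the canonical morphism onto the free group of
   reduced words.  Every element of FIM(X) is a product of letters, so [fm a] lies
   above the value of the reduced word of [pi a].  Given a finite presentation, let
   K bound the lengths |pi v| of the words v occurring under ^m in the relations.
   The F-inverse monoid N_K consists of the pairs (A, g) where A is a set of group
   elements containing 1 and g and every geodesic between two points of A at
   distance at most K; (A, g)(B, h) = (cl (A u gB), gh) and (A, g)^m = (cl {1, g}, g).
   The morphism psi : FIM(X) -> N_K with x |-> (prefixes of x, x) computes ^m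
   correctly on elements of length at most K, so y |-> psi (phi y) satisfies R and
   induces an evaluation of FInv<Y | R>.  Under it, products of letters go to pairs
   (A, g) with A containing all prefixes of g, yet for g = x0^(K+2) the element
   g^m goes to (cl {1, g}, g) = ({1, g}, g). *)

From Stdlib Require Import ClassicalEpsilon FunctionalExtensionality.
From Stdlib Require Import PropExtensionality ProofIrrelevance.
From HB Require Import structures.
From mathcomp Require Import all_boot zify.
Set Implicit Arguments. Unset Strict Implicit. Unset Printing Implicit Defensive.

Definition classically (X : Type) : Type := X.
Definition classic_eqb (X : Type) (a b : X) : bool := excluded_middle_informative (a = b).
Lemma classic_eqbP (X : Type) : Equality.axiom (@classic_eqb X).
Proof. by move=> a b; rewrite /classic_eqb; case: excluded_middle_informative; constructor. Qed.
HB.instance Definition _ (X : Type) := hasDecEq.Build (classically X) (@classic_eqbP X).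

Lemma pred_ext (T : Type) (A B : T -> Prop) : (forall z, A z <-> B z) -> A = B.
Proof.
by move=> AB; apply: functional_extensionality => z; apply: propositional_extensionality.
Qed.

Lemma cat_cases (T : Type) (z s a b : seq T) : z ++ s = a ++ b ->
  (exists t, a = z ++ t) \/ (exists p t, z = a ++ p /\ b = p ++ t).
Proof.
elim: z a => [|x z IH] a /= e; first by left; exists a.
case: a e => [|y a] /= e; first by right; exists (x :: z), s.
by case: e => -> /IH [[t ->]|[p [t [-> ->]]]]; [left; exists t | right; exists p, t].
Qed.

Lemma prefix_total (T : eqType) (p q s : seq T) :
  prefix p s -> prefix q s -> prefix p q || prefix q p.
Proof.
wlog le : p q / size p <= size q => [hyp ps qs|].
  by case: (leqP (size p) (size q)) => [|/ltnW] le; [|rewrite orbC]; apply: hyp.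
rewrite [prefix q s]prefixE => ps /eqP qs; apply/orP; left.
by rewrite prefixE -qs take_takel // -prefixE.
Qed.

Section ReducedWords.
Variable X : Type.

Definition letter : Type := (classically X * bool)%type.
Definition letter_inv (a : letter) : letter := (a.1, ~~ a.2).
Lemma letter_invK a : letter_inv (letter_inv a) = a. Proof. by case: a => x []. Qed.

Definition no_cancel (a b : letter) : bool := b != letter_inv a.
Definition reduced (w : seq letter) : bool := sorted no_cancel w.

Lemma reduced_nseq n a : reduced (nseq n a).
Proof.
have aa : no_cancel a a by case: a => x []; rewrite /no_cancel /letter_inv /= xpair_eqE eqxx.
by elim: n => [|[|n] IH] //; apply/andP.
Qed.

Lemma reduced_consr a w : reduced (a :: w) -> reduced w.
Proof. exact: path_sorted. Qed.
Lemma reduced_catl u v : reduced (u ++ v) -> reduced u.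
Proof. by case/cat_sorted2. Qed.
Lemma reduced_catr u v : reduced (u ++ v) -> reduced v.
Proof. by case/cat_sorted2. Qed.

Definition cons_reduce (a : letter) (w : seq letter) : seq letter :=
  if w is b :: w' then (if b == letter_inv a then w' else a :: w) else [:: a].
Definition word_mul (u v : seq letter) : seq letter := foldr cons_reduce v u.
Definition word_inv (w : seq letter) : seq letter := rev (map letter_inv w).

Lemma cons_reduce_id a w : reduced (a :: w) -> cons_reduce a w = a :: w.
Proof. by case: w => //= b w /andP[/negbTE ->]. Qed.

Lemma cons_reduce_reduced a w : reduced w -> reduced (cons_reduce a w).
Proof.
case: w => [|b w] //= rw; case: ifP => ba; first exact: reduced_consr rw.
by rewrite /reduced /= /no_cancel ba.
Qed.

Lemma word_mul_reduced u v : reduced v -> reduced (word_mul u v).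
Proof. by move=> rv; elim: u => //= a u; apply: cons_reduce_reduced. Qed.

Lemma cons_reduceK a w : reduced w -> cons_reduce a (cons_reduce (letter_inv a) w) = w.
Proof.
case: w => [|b w] /=; first by rewrite eqxx.
rewrite letter_invK; case: ifP => [/eqP -> | _] rw /=; last by rewrite eqxx.
by case: w rw => [|c w] //= /andP[/negbTE ->].
Qed.

Lemma word_mul_cat u u' v : word_mul (u ++ u') v = word_mul u (word_mul u' v).
Proof. exact: foldr_cat. Qed.

Lemma word_mulA u w v : reduced v -> word_mul (word_mul u w) v = word_mul u (word_mul w v).
Proof.
move=> rv; elim: u => [|a u IH] //=; rewrite -IH.
case: (word_mul u w) => [|b w'] //=; case: ifP => // /eqP ->.
by rewrite cons_reduceK // word_mul_reduced.
Qed.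

Lemma word_mul_cat_reduced u v : reduced (u ++ v) -> word_mul u v = u ++ v.
Proof.
elim: u => [|a u IH] //= r.
by rewrite IH ?cons_reduce_id //; apply: reduced_consr r.
Qed.

Lemma word_mul_nil u : reduced u -> word_mul u [::] = u.
Proof. by move=> r; rewrite word_mul_cat_reduced ?cats0. Qed.

Lemma word_inv_cat u v : word_inv (u ++ v) = word_inv v ++ word_inv u.
Proof. by rewrite /word_inv map_cat rev_cat. Qed.
Lemma word_invK : involutive word_inv.
Proof. by move=> u; rewrite /word_inv map_rev revK -map_comp (eq_map letter_invK) map_id. Qed.
Lemma size_word_inv u : size (word_inv u) = size u.
Proof. by rewrite size_rev size_map. Qed.
Lemma word_inv_reduced u : reduced u -> reduced (word_inv u).
Proof.
rewrite /reduced rev_sorted sorted_map; apply: sub_sorted => a b.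
by rewrite /relpre /no_cancel /= letter_invK eq_sym.
Qed.

Lemma word_mulVw u : word_mul (word_inv u) u = [::].
Proof.
elim: u => [|a u IH] //=.
by rewrite -cat1s word_inv_cat word_mul_cat /= letter_invK eqxx.
Qed.
Lemma word_mulwV u : word_mul u (word_inv u) = [::].
Proof. by rewrite -{1}(word_invK u) word_mulVw. Qed.

Lemma word_mul_inv_cat p t : reduced (p ++ t) -> word_mul (word_inv p) (p ++ t) = t.
Proof.
move=> r; rewrite -(word_mul_cat_reduced r) -word_mulA ?word_mulVw //.
exact: reduced_catr r.
Qed.

Lemma word_mul_split u v : reduced u -> reduced v ->
  exists u' c v', [/\ u = u' ++ c, v = word_inv c ++ v' & word_mul u v = u' ++ v'].
Proof.
move=> + rv; elim: u => [|a u IH] ru; first by exists [::], [::], v.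
have [u' [c [v' [eu ev em]]]] := IH (reduced_consr ru); clear IH; subst u v; clear rv.
rewrite /= em; case: u' ru em => [|b u''] ru em; last first.
  move: ru; rewrite /reduced /= => /andP[/negbTE ab _].
  by exists [:: a, b & u''], c, v'; rewrite /= ab.
case: v' em => [|d v''] em; first by exists [:: a], c, [::].
have [da|] := eqVneq d (letter_inv a); last first.
  by move/negbTE=> da; exists [:: a], c, (d :: v''); rewrite /= da.
exists [::], (a :: c), v''; split => //=; last by rewrite da eqxx.
by rewrite -[a :: c]cat1s word_inv_cat -catA da.
Qed.

End ReducedWords.

Record fgroup (X : Type) := FGroup { fword : seq (letter X); fword_reduced : reduced fword }.
HB.instance Definition _ (X : Type) := [isSub for @fword X].
HB.instance Definition _ (X : Type) := [Equality of fgroup X by <:].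

Section FreeGroup.
Variable X : Type.
Local Notation fgroup := (fgroup X).

Definition fg_mul (g h : fgroup) : fgroup := FGroup (word_mul_reduced (fword g) (fword_reduced h)).
Definition fg_one : fgroup := @FGroup X [::] isT.
Definition fg_inv (g : fgroup) : fgroup := FGroup (word_inv_reduced (fword_reduced g)).
Definition fg_letter (a : letter X) : fgroup := @FGroup X [:: a] isT.
Definition fg_reduce (w : seq (letter X)) : fgroup :=
  FGroup (word_mul_reduced w (isT : reduced (@nil (letter X)))).

Lemma fg_mulA a b c : fg_mul a (fg_mul b c) = fg_mul (fg_mul a b) c.
Proof. by apply: val_inj; rewrite /= word_mulA // fword_reduced. Qed.
Lemma fg_mul1g a : fg_mul fg_one a = a. Proof. exact: val_inj. Qed.
Lemma fg_mulg1 a : fg_mul a fg_one = a.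
Proof. by apply: val_inj; rewrite /= word_mul_nil // fword_reduced. Qed.
Lemma fg_mulVg a : fg_mul (fg_inv a) a = fg_one.
Proof. by apply: val_inj; rewrite /= word_mulVw. Qed.
Lemma fg_mulgV a : fg_mul a (fg_inv a) = fg_one.
Proof. by apply: val_inj; rewrite /= word_mulwV. Qed.
Lemma fg_invK : involutive fg_inv. Proof. by move=> a; apply: val_inj; rewrite /= word_invK. Qed.
Lemma fg_mulKg a b : fg_mul (fg_inv a) (fg_mul a b) = b.
Proof. by rewrite fg_mulA fg_mulVg fg_mul1g. Qed.
Lemma fg_mulKVg a b : fg_mul a (fg_mul (fg_inv a) b) = b.
Proof. by rewrite fg_mulA fg_mulgV fg_mul1g. Qed.
Lemma fg_invM a b : fg_inv (fg_mul a b) = fg_mul (fg_inv b) (fg_inv a).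
Proof.
rewrite -[RHS]fg_mulg1 -(fg_mulgV (fg_mul a b)) fg_mulA -(fg_mulA (fg_inv b)) fg_mulKg.
by rewrite fg_mulVg fg_mul1g.
Qed.
Lemma fg_inv1 : fg_inv fg_one = fg_one. Proof. exact: val_inj. Qed.
Lemma fg_idem_eq1 g : fg_mul g g = g -> g = fg_one.
Proof. by move=> gg; rewrite -(fg_mulKg g g) gg fg_mulVg. Qed.

Lemma fword_mul_cat g h : reduced (fword g ++ fword h) -> fword (fg_mul g h) = fword g ++ fword h.
Proof. exact: word_mul_cat_reduced. Qed.

Definition fg_len (g : fgroup) : nat := size (fword g).
Definition fg_dist (p q : fgroup) : nat := fg_len (fg_mul (fg_inv p) q).
Definition fg_prefix (z g : fgroup) : bool := prefix (fword z) (fword g).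
Definition geodesic (p q z : fgroup) : Prop := fg_dist p z + fg_dist z q = fg_dist p q.

Lemma fg_len_inv g : fg_len (fg_inv g) = fg_len g. Proof. exact: size_word_inv. Qed.
Lemma fg_len_eq0 g : fg_len g = 0 -> g = fg_one. Proof. by move/size0nil=> g0; apply: val_inj. Qed.
Lemma fg_distC p q : fg_dist p q = fg_dist q p.
Proof. by rewrite /fg_dist -fg_len_inv fg_invM fg_invK. Qed.
Lemma fg_dist_mull a p q : fg_dist (fg_mul a p) (fg_mul a q) = fg_dist p q.
Proof. by rewrite /fg_dist fg_invM -fg_mulA fg_mulKg. Qed.
Lemma fg_dist1g g : fg_dist fg_one g = fg_len g. Proof. by rewrite /fg_dist fg_inv1 fg_mul1g. Qed.
Lemma fg_distgg g : fg_dist g g = 0. Proof. by rewrite /fg_dist fg_mulVg. Qed.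
Lemma fg_dist_eq0 p q : fg_dist p q = 0 -> q = p.
Proof. by move/fg_len_eq0 => pq; rewrite -(fg_mulKVg p q) pq fg_mulg1. Qed.

Lemma geodesic_mull a p q z : geodesic (fg_mul a p) (fg_mul a q) (fg_mul a z) <-> geodesic p q z.
Proof. by rewrite /geodesic !fg_dist_mull. Qed.
Lemma geodesicC p q z : geodesic p q z <-> geodesic q p z.
Proof. by rewrite /geodesic addnC (fg_distC p z) (fg_distC z q) (fg_distC p q). Qed.

Lemma fg_prefix1g g : fg_prefix fg_one g. Proof. exact: prefix0s. Qed.
Lemma fg_prefix_refl g : fg_prefix g g. Proof. exact: prefix_refl. Qed.
Lemma fg_prefix_trans h g z : fg_prefix z h -> fg_prefix h g -> fg_prefix z g.
Proof. exact: prefix_trans. Qed.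
Lemma fg_prefixg1 z : fg_prefix z fg_one -> z = fg_one.
Proof. by rewrite /fg_prefix prefixs0 => /eqP z0; apply: val_inj. Qed.

Lemma fg_prefix_short g z : fg_len g <= 1 -> fg_prefix z g -> z = fg_one \/ z = g.
Proof.
rewrite /fg_len => g1 /prefixP[[|a s] eg]; first by right; apply: val_inj; rewrite /= eg cats0.
by left; apply: fg_len_eq0; move: g1; rewrite eg size_cat /fg_len /=; lia.
Qed.

Lemma geodesic1P g z : geodesic fg_one g z <-> fg_prefix z g.
Proof.
rewrite /geodesic !fg_dist1g; split; last first.
  case/prefixP=> s es; rewrite /fg_dist /fg_len /= es word_mul_inv_cat ?size_cat //.
  by rewrite -es fword_reduced.
rewrite /fg_dist /fg_len /=.
have [u' [c [v' [eu ev ->]]]] :=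
  word_mul_split (word_inv_reduced (fword_reduced z)) (fword_reduced g).
have sz : size (fword z) = size u' + size c by rewrite -size_word_inv eu size_cat.
rewrite ev !size_cat size_word_inv sz => e.
have /size0nil u'0 : size u' = 0 by lia.
by apply/prefixP; exists v'; rewrite ev -(word_invK (fword z)) eu u'0.
Qed.

Lemma fg_prefix_mull g h y : reduced (fword g ++ fword h) -> fg_prefix y h ->
  fg_prefix (fg_mul g y) (fg_mul g h).
Proof.
move=> r /prefixP[s eh]; apply/prefixP; exists s.
have rgy : reduced (fword g ++ fword y) by move: r; rewrite eh catA => /reduced_catl.
by rewrite !fword_mul_cat // eh catA.
Qed.

Lemma fg_prefix_mul g h z : fg_prefix z (fg_mul g h) ->
  fg_prefix z g \/ fg_prefix (fg_mul (fg_inv g) z) h.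
Proof.
have [g' [c [h' [eg eh em]]]] := word_mul_split (fword_reduced g) (fword_reduced h).
case/prefixP=> s; rewrite /= em => /esym /cat_cases [[t et]|[p [t [ez eh']]]].
  by left; apply/prefixP; exists (t ++ c); rewrite eg et catA.
have rh := fword_reduced h; rewrite eh eh' catA in rh.
right; apply/prefixP; exists t => /=.
rewrite eg word_inv_cat word_mul_cat ez word_mul_inv_cat -?ez ?fword_reduced //.
by rewrite word_mul_cat_reduced ?eh ?eh' ?catA // (reduced_catl rh).
Qed.

Lemma fg_prefix_inv g z : fg_prefix z (fg_inv g) -> fg_prefix (fg_mul g z) g.
Proof.
case/prefixP=> t e.
have eg : fword g = word_inv t ++ word_inv (fword z) by rewrite -word_inv_cat -e word_invK.
apply/prefixP; exists (word_inv (fword z)) => /=.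
rewrite eg word_mul_cat word_mulVw word_mul_nil //.
by have := fword_reduced g; rewrite eg => /reduced_catl.
Qed.

Lemma prefix_geodesic_prefix p q z : fg_prefix p q -> geodesic p q z -> fg_prefix z q.
Proof.
move=> pq; rewrite -(geodesic_mull (fg_inv p)) fg_mulVg => /geodesic1P/prefixP[r er].
have /prefixP[t eq] := pq.
have et : fword (fg_mul (fg_inv p) q) = t by rewrite /= eq word_mul_inv_cat // -eq fword_reduced.
have rq : reduced (fword p ++ fword (fg_mul (fg_inv p) z)).
  by have := fword_reduced q; rewrite eq -et er catA => /reduced_catl.
apply/prefixP; exists r.
by rewrite -(fg_mulKVg p z) fword_mul_cat // -catA -er et -eq.
Qed.

Lemma prefix_convex g p q z : fg_prefix p g -> fg_prefix q g -> geodesic p q z -> fg_prefix z g.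
Proof.
move=> pg qg; have /orP[pq|qp] := prefix_total pg qg.
  by move=> /(prefix_geodesic_prefix pq) /fg_prefix_trans; apply.
by move=> /geodesicC /(prefix_geodesic_prefix qp) /fg_prefix_trans; apply.
Qed.

End FreeGroup.

Section InverseMonoidFacts.
Variable M : InvMon.
Local Notation "a * b" := (@imul M a b).
Local Notation "a ^-1" := (@iinv M a).

Lemma idem_mulV (a : M) : (a * a^-1) * (a * a^-1) = a * a^-1.
Proof. by rewrite imulA iinv_reg. Qed.
Lemma idem_Vmul (a : M) : (a^-1 * a) * (a^-1 * a) = a^-1 * a.
Proof. by rewrite imulA iinv_reg'. Qed.

Lemma iinv_unique (a x : M) : (a * x) * a = a -> (x * a) * x = x -> x = a^-1.
Proof.
move=> axa xax.
have ix : (x * a) * (x * a) = x * a by rewrite imulA xax.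
have ax : (a * x) * (a * x) = a * x by rewrite imulA axa.
have e1 : x = a^-1 * (a * x).
  have s1 : x * a = x * (a * (a^-1 * a)) by rewrite (imulA a) iinv_reg.
  have s2 : x * (a * (a^-1 * a)) = (a^-1 * a) * (x * a).
    by rewrite (imulA x a) (iidem_comm ix (idem_Vmul a)).
  by rewrite -{1}xax s1 s2 -!imulA (imulA x a x) xax.
have e2 : x = (x * a) * a^-1.
  have s1 : a * x = ((a * a^-1) * a) * x by rewrite iinv_reg.
  have s2 : ((a * a^-1) * a) * x = (a * x) * (a * a^-1).
    by rewrite -(imulA _ a x) (iidem_comm (idem_mulV a) ax).
  by rewrite -{1}xax -imulA s1 s2 !imulA xax.
rewrite e1 e2 -!imulA (imulA x a) (imulA a (x * a)) (imulA a x a) axa.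
by rewrite imulA iinv_reg'.
Qed.

Lemma iinvK (a : M) : (a^-1)^-1 = a.
Proof. by apply/esym/iinv_unique; [apply: iinv_reg' | apply: iinv_reg]. Qed.

Lemma iinvM (a b : M) : (a * b)^-1 = b^-1 * a^-1.
Proof.
apply/esym/iinv_unique.
  have k1 : b * (b^-1 * (a^-1 * (a * b))) = (a^-1 * a) * b.
    rewrite (imulA a^-1 a b) (imulA b^-1 _ b) (imulA b _ b) (imulA b b^-1).
    by rewrite (iidem_comm (idem_mulV b) (idem_Vmul a)) -imulA iinv_reg.
  by rewrite -!imulA k1 (imulA a) (imulA a a^-1) iinv_reg.
have k2 : a^-1 * (a * (b * (b^-1 * a^-1))) = (b * b^-1) * a^-1.
  rewrite (imulA b b^-1) (imulA a _ a^-1) (imulA a^-1 _ a^-1) (imulA a^-1 a).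
  by rewrite (iidem_comm (idem_Vmul a) (idem_mulV b)) -imulA iinv_reg'.
by rewrite -!imulA k2 (imulA b^-1) (imulA b^-1 b) iinv_reg'.
Qed.

Lemma iinv1 : (ione M)^-1 = ione M.
Proof. by apply/esym/iinv_unique; rewrite !imul1l. Qed.

Lemma sigma_refl (a : M) : sigma_rel a a.
Proof. by exists (ione M); rewrite imul1l. Qed.

Lemma sigma_trans (a b c : M) : sigma_rel a b -> sigma_rel b c -> sigma_rel a c.
Proof.
case=> e [ee eab] [f [ff fbc]]; exists (e * f); split.
  by rewrite -imulA (imulA f e f) -(iidem_comm ee ff) -(imulA e f f) ff imulA ee.
by rewrite (iidem_comm ee ff) -!imulA eab !imulA -(iidem_comm ee ff) -!imulA fbc.
Qed.

Lemma sigma_idem_mul (e s : M) : e * e = e -> sigma_rel (e * s) s.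
Proof. by move=> ee; exists e; split => //; rewrite imulA ee. Qed.

Lemma sigma_mul2l (s a b : M) : sigma_rel a b -> sigma_rel (s * a) (s * b).
Proof.
case=> e [ee eab].
have conj c : ((s * e) * s^-1) * (s * c) = s * (e * c).
  rewrite -!imulA (imulA s^-1 s c) (imulA e (s^-1 * s) c) (iidem_comm ee (idem_Vmul s)).
  by rewrite -(imulA _ e c) (imulA s (s^-1 * s)) (imulA s s^-1 s) iinv_reg.
exists ((s * e) * s^-1); split; last by rewrite !conj eab.
have eA : (s * e) * s^-1 = s * (e * s^-1) by rewrite imulA.
by rewrite {2}eA conj (imulA e e) ee -eA.
Qed.

End InverseMonoidFacts.

Section Morphisms.
Variables (M N : InvMon) (h : M -> N).
Hypothesis h_morph : invmon_morph h.

Lemma morph_mul a b : h (imul a b) = imul (h a) (h b). Proof. by case: h_morph. Qed.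
Lemma morph_one : h (ione M) = ione N. Proof. by case: h_morph => _ []. Qed.
Lemma morph_inv a : h (iinv a) = iinv (h a). Proof. by case: h_morph => _ []. Qed.
Lemma morph_nat_le a b : nat_le a b -> nat_le (h a) (h b).
Proof. by rewrite /nat_le => e; rewrite {1}e !morph_mul morph_inv. Qed.

Lemma morph_comp (L : InvMon) (k : N -> L) : invmon_morph k -> invmon_morph (k \o h).
Proof.
case=> kM [k1 kV]; split; last split => /=.
- by move=> a b; rewrite /= morph_mul kM.
- by rewrite morph_one k1.
- by move=> a; rewrite morph_inv kV.
Qed.
End Morphisms.

Lemma free_morph_ext (X : Type) (M N : InvMon) (iota : X -> M) (h1 h2 : M -> N) :
  is_free_inverse_monoid iota -> invmon_morph h1 -> invmon_morph h2 ->
  (forall x, h1 (iota x) = h2 (iota x)) -> forall m, h1 m = h2 m.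
Proof. by move=> free h1M h2M e; apply: (free N (h2 \o iota)).2. Qed.

Section SubInverseMonoid.
Variables (M : InvMon) (P : M -> Prop).
Hypotheses (P1 : P (ione M)) (PM : forall a b, P a -> P b -> P (imul a b))
  (PV : forall a, P a -> P (iinv a)).

Definition sub_elt : Type := {a : M | P a}.
Lemma sub_elt_eq (a b : sub_elt) : proj1_sig a = proj1_sig b -> a = b.
Proof. by case: a b => a Pa [b Pb] /= ab; subst; rewrite (proof_irrelevance _ Pa Pb). Qed.

Definition sub_mul (a b : sub_elt) : sub_elt := exist _ _ (PM (proj2_sig a) (proj2_sig b)).
Definition sub_inv (a : sub_elt) : sub_elt := exist _ _ (PV (proj2_sig a)).
Definition sub_one : sub_elt := exist _ _ P1.

Lemma sub_mulA a b c : sub_mul a (sub_mul b c) = sub_mul (sub_mul a b) c.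
Proof. exact/sub_elt_eq/imulA. Qed.
Lemma sub_mul1l a : sub_mul sub_one a = a. Proof. exact/sub_elt_eq/imul1l. Qed.
Lemma sub_mul1r a : sub_mul a sub_one = a. Proof. exact/sub_elt_eq/imul1r. Qed.
Lemma sub_inv_reg a : sub_mul (sub_mul a (sub_inv a)) a = a. Proof. exact/sub_elt_eq/iinv_reg. Qed.
Lemma sub_inv_reg' a : sub_mul (sub_mul (sub_inv a) a) (sub_inv a) = sub_inv a.
Proof. exact/sub_elt_eq/iinv_reg'. Qed.
Lemma sub_idem_comm e f : sub_mul e e = e -> sub_mul f f = f -> sub_mul e f = sub_mul f e.
Proof.
move=> /(f_equal (@proj1_sig _ _)) ee /(f_equal (@proj1_sig _ _)) ff.
exact/sub_elt_eq/iidem_comm.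
Qed.

Definition sub_invMon : InvMon := {|
  icar := sub_elt; imul := sub_mul; ione := sub_one; iinv := sub_inv;
  imulA := sub_mulA; imul1l := sub_mul1l; imul1r := sub_mul1r;
  iinv_reg := sub_inv_reg; iinv_reg' := sub_inv_reg'; iidem_comm := sub_idem_comm |}.

Lemma free_invmon_ind (X : Type) (iota : X -> M) :
  is_free_inverse_monoid iota -> (forall x, P (iota x)) -> forall a, P a.
Proof.
move=> free Piota a.
have [[h [hM hiota]] _] := free sub_invMon (fun x => exist _ _ (Piota x)).
have valM : invmon_morph (fun b : sub_invMon => proj1_sig b) by [].
have idM : invmon_morph (fun b : M => b) by [].
have <- : proj1_sig (h a) = a.
  by apply: (free_morph_ext free (morph_comp hM valM) idM) => x; rewrite /= hiota.
exact: proj2_sig (h a).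
Qed.
End SubInverseMonoid.

Section FreeGroupInverseMonoid.
Variable X : Type.

Lemma fg_inv_reg (g : fgroup X) : fg_mul (fg_mul g (fg_inv g)) g = g.
Proof. by rewrite fg_mulgV fg_mul1g. Qed.
Lemma fg_inv_reg' (g : fgroup X) : fg_mul (fg_mul (fg_inv g) g) (fg_inv g) = fg_inv g.
Proof. by rewrite fg_mulVg fg_mul1g. Qed.
Lemma fg_idem_comm (e f : fgroup X) : fg_mul e e = e -> fg_mul f f = f -> fg_mul e f = fg_mul f e.
Proof. by move=> /fg_idem_eq1 -> /fg_idem_eq1 ->. Qed.

Definition fg_invMon : InvMon := {|
  icar := fgroup X; imul := @fg_mul X; ione := fg_one X; iinv := @fg_inv X;
  imulA := @fg_mulA X; imul1l := @fg_mul1g X; imul1r := @fg_mulg1 X;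
  iinv_reg := fg_inv_reg; iinv_reg' := fg_inv_reg'; iidem_comm := fg_idem_comm |}.

Lemma morph_fg_sigma (M : InvMon) (h : M -> fg_invMon) (a b : M) :
  invmon_morph h -> sigma_rel a b -> h a = h b.
Proof.
move=> hM [e [ee eab]].
have he : h e = fg_one X by apply: fg_idem_eq1; have := morph_mul hM e e; rewrite ee => /esym.
by have := f_equal h eab; rewrite !(morph_mul hM) he /= !fg_mul1g.
Qed.
End FreeGroupInverseMonoid.

Section KClosedSets.
Variables (X : Type) (K : nat).
Local Notation fgroup := (fgroup X).
Local Notation fg_one := (fg_one X).

Definition kclosed (S : fgroup -> Prop) : Prop :=
  forall p q z, S p -> S q -> fg_dist p q <= K -> geodesic p q z -> S z.
Definition kclosure (S : fgroup -> Prop) (z : fgroup) : Prop :=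
  forall T, kclosed T -> (forall y, S y -> T y) -> T z.

Lemma kclosure_sub S z : S z -> kclosure S z. Proof. by move=> Sz T _; apply. Qed.
Lemma kclosure_closed S : kclosed (kclosure S).
Proof. by move=> p q z Sp Sq pq pzq T cT ST; apply: (cT p q) => //; [apply: Sp | apply: Sq]. Qed.
Lemma kclosure_min S T : kclosed T -> (forall y, S y -> T y) -> forall z, kclosure S z -> T z.
Proof. by move=> cT ST z; apply. Qed.
Lemma kclosure_mono S T : (forall y, S y -> kclosure T y) -> forall z, kclosure S z -> kclosure T z.
Proof. by move=> ST; apply: kclosure_min => //; apply: kclosure_closed. Qed.
Lemma kclosure_id S A :
  kclosed A -> (forall z, S z -> A z) -> (forall z, A z -> S z) -> kclosure S = A.
Proof.
move=> cA SA AS; apply: pred_ext => z; split; first exact: kclosure_min.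
by move/AS; apply: kclosure_sub.
Qed.

Lemma kclosed_mull S h : kclosed S -> kclosed (fun z => S (fg_mul h z)).
Proof.
by move=> cS p q z Sp Sq pq pzq; apply: (cS _ _ _ Sp Sq); rewrite ?fg_dist_mull ?geodesic_mull.
Qed.

Lemma kclosure_mull_min S T h : kclosed T -> (forall y, S y -> T (fg_mul h y)) ->
  forall y, kclosure S y -> T (fg_mul h y).
Proof.
by move=> cT ST y; apply: (kclosure_min (T := fun y => T (fg_mul h y))) => //; apply: kclosed_mull.
Qed.

Lemma kclosed_prefix g : kclosed (fun z => fg_prefix z g).
Proof. by move=> p q z pg qg _; apply: prefix_convex. Qed.

Lemma kclosed_pair g : K < fg_len g -> kclosed (fun z => z = fg_one \/ z = g).
Proof.
move=> Kg p q z p1g q1g.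
have d1g := fg_dist1g g; have dg1 : fg_dist g fg_one = fg_len g by rewrite fg_distC.
case: p1g q1g => -> [] -> pq; rewrite /geodesic ?fg_distgg => e; try lia.
  by left; apply: fg_dist_eq0; lia.
by right; apply: fg_dist_eq0; lia.
Qed.

Record kelt := KElt {
  kset : fgroup -> Prop; kgrp : fgroup;
  kset_closed : kclosed kset; kset1 : kset fg_one; ksetg : kset kgrp }.

Lemma kelt_eq (a b : kelt) : kset a = kset b -> kgrp a = kgrp b -> a = b.
Proof.
case: a b => [A g cA A1 Ag] [B h cB B1 Bh] /= AB gh; subst.
by rewrite (proof_irrelevance _ cA cB) (proof_irrelevance _ A1 B1) (proof_irrelevance _ Ag Bh).
Qed.

Definition prefix_elt (g : fgroup) : kelt :=
  KElt (@kclosed_prefix g) (@fg_prefix1g X g) (@fg_prefix_refl X g).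

Definition kmul_set (a b : kelt) : fgroup -> Prop :=
  kclosure (fun z => kset a z \/ kset b (fg_mul (fg_inv (kgrp a)) z)).
Lemma kmul_set1 a b : kmul_set a b fg_one. Proof. by apply: kclosure_sub; left; apply: kset1. Qed.
Lemma kmul_setg a b : kmul_set a b (fg_mul (kgrp a) (kgrp b)).
Proof. by apply: kclosure_sub; right; rewrite fg_mulKg; apply: ksetg. Qed.
Definition kmul (a b : kelt) : kelt :=
  KElt (@kclosure_closed _) (@kmul_set1 a b) (@kmul_setg a b).

Definition kone : kelt := prefix_elt fg_one.

Lemma kinv_set1 a : kset a (fg_mul (kgrp a) fg_one). Proof. by rewrite fg_mulg1; apply: ksetg. Qed.
Lemma kinv_setg a : kset a (fg_mul (kgrp a) (fg_inv (kgrp a))).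
Proof. by rewrite fg_mulgV; apply: kset1. Qed.
Definition kinv (a : kelt) : kelt :=
  KElt (@kclosed_mull _ (kgrp a) (@kset_closed a)) (@kinv_set1 a) (@kinv_setg a).

Definition kmax_set (a : kelt) : fgroup -> Prop := kclosure (fun z => z = fg_one \/ z = kgrp a).
Lemma kmax_set1 a : kmax_set a fg_one. Proof. by apply: kclosure_sub; left. Qed.
Lemma kmax_setg a : kmax_set a (kgrp a). Proof. by apply: kclosure_sub; right. Qed.
Definition kmax (a : kelt) : kelt := KElt (@kclosure_closed _) (@kmax_set1 a) (@kmax_setg a).

Lemma kset_mull a b z : kset a z -> kset (kmul a b) z.
Proof. by move=> az; apply: kclosure_sub; left. Qed.
Lemma kset_mulr a b z : kset b (fg_mul (fg_inv (kgrp a)) z) -> kset (kmul a b) z.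
Proof. by move=> bz; apply: kclosure_sub; right. Qed.

Lemma kset_mul_id a b : (forall z, kset b (fg_mul (fg_inv (kgrp a)) z) -> kset a z) ->
  kset (kmul a b) = kset a.
Proof.
move=> ba; apply: kclosure_id; first exact: kset_closed.
  by move=> z [//|/ba].
by move=> z az; left.
Qed.

Lemma kset_idem_mul e b : kgrp e = fg_one -> (forall z, kset b z -> kset e z) ->
  kset (kmul e b) = kset e.
Proof. by move=> e1 be; rewrite kset_mul_id // => z; rewrite e1 fg_inv1 fg_mul1g; apply: be. Qed.

Lemma kmulA a b c : kmul a (kmul b c) = kmul (kmul a b) c.
Proof.
apply: kelt_eq; last by rewrite /= fg_mulA.
apply: pred_ext => z; split.
  apply: kclosure_mono => y [ay|bcy]; first by apply: kclosure_sub; left; apply: kset_mull.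
  rewrite -(fg_mulKVg (kgrp a) y).
  apply: (kclosure_mull_min (T := kset (kmul (kmul a b) c))) bcy; first exact: kset_closed.
  move=> w [bw|cw]; first by apply: kclosure_sub; left; apply: kset_mulr; rewrite fg_mulKg.
  by apply: kclosure_sub; right => /=; rewrite fg_invM -fg_mulA fg_mulKg.
apply: kclosure_mono => y [aby|cy].
  apply: (kclosure_min (T := kset (kmul a (kmul b c)))) aby; first exact: kset_closed.
  move=> w [aw|bw]; first by apply: kclosure_sub; left.
  by apply: kclosure_sub; right; apply: kset_mull.
apply: kclosure_sub; right; apply: kset_mulr.
by move: cy => /=; rewrite fg_invM -fg_mulA.
Qed.

Lemma kmul1k a : kmul kone a = a.
Proof.
apply: kelt_eq; last by rewrite /= fg_mul1g.
apply: kclosure_id; first exact: kset_closed.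
  by move=> z [/fg_prefixg1 ->|]; [apply: kset1 | rewrite /= fg_inv1 fg_mul1g].
by move=> z az; right; rewrite /= fg_inv1 fg_mul1g.
Qed.

Lemma kmulk1 a : kmul a kone = a.
Proof.
apply: kelt_eq; last by rewrite /= fg_mulg1.
rewrite kset_mul_id // => z /fg_prefixg1 e.
by rewrite -(fg_mulKVg (kgrp a) z) e fg_mulg1; apply: ksetg.
Qed.

Lemma kset_mulV a : kset (kmul a (kinv a)) = kset a.
Proof. by rewrite kset_mul_id // => z /=; rewrite fg_mulKVg. Qed.
Lemma kset_Vmul a : kset (kmul (kinv a) a) = kset (kinv a).
Proof. by rewrite kset_mul_id // => z /=; rewrite fg_invK. Qed.

Lemma kinv_reg a : kmul (kmul a (kinv a)) a = a.
Proof.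
apply: kelt_eq; last by rewrite /= fg_mulgV fg_mul1g.
by rewrite kset_idem_mul ?kset_mulV //= fg_mulgV.
Qed.

Lemma kinv_reg' a : kmul (kmul (kinv a) a) (kinv a) = kinv a.
Proof.
apply: kelt_eq; last by rewrite /= fg_mulVg fg_mul1g.
by rewrite kset_idem_mul ?kset_Vmul //= fg_mulVg.
Qed.

Lemma kgrp_idem e : kmul e e = e -> kgrp e = fg_one.
Proof. by move=> ee; apply: fg_idem_eq1; rewrite -{3}ee. Qed.

Lemma kidem_comm e f : kmul e e = e -> kmul f f = f -> kmul e f = kmul f e.
Proof.
move=> /kgrp_idem e1 /kgrp_idem f1; apply: kelt_eq; last by rewrite /= e1 f1.
rewrite /= /kmul_set e1 f1 fg_inv1; congr kclosure; apply: pred_ext => z.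
by rewrite fg_mul1g; tauto.
Qed.

Definition kelt_invMon : InvMon := {|
  icar := kelt; imul := kmul; ione := kone; iinv := kinv;
  imulA := kmulA; imul1l := kmul1k; imul1r := kmulk1;
  iinv_reg := kinv_reg; iinv_reg' := kinv_reg'; iidem_comm := kidem_comm |}.

Lemma kgrp_morph : invmon_morph (kgrp : kelt_invMon -> fg_invMon X).
Proof. by []. Qed.

Lemma kset_nat_le (s t : kelt_invMon) z : nat_le s t -> kset t z -> kset s z.
Proof. by rewrite /nat_le => -> tz; apply: kset_mulr; rewrite /= fg_mulgV fg_inv1 fg_mul1g. Qed.

Lemma kmax_sub a z : kset (kmax a) z -> kset a z.
Proof.
by apply: kclosure_min; [apply: kset_closed | move=> y [->|->]; [apply: kset1 | apply: ksetg]].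
Qed.

Lemma kmax_sigma (s : kelt_invMon) : sigma_rel s (kmax s).
Proof.
pose e : kelt := KElt (@kset_closed s) (@kset1 s) (@kset1 s).
exists e; split; first by apply: kelt_eq; [exact: kset_idem_mul | rewrite /= fg_mul1g].
apply: kelt_eq => //.
by rewrite (@kset_idem_mul e s) // (@kset_idem_mul e (kmax s)) // => z /kmax_sub.
Qed.

Lemma kmax_greatest (s t : kelt_invMon) : sigma_rel s t -> nat_le t (kmax s).
Proof.
case=> e [/kgrp_idem e1 est].
have st : kgrp s = kgrp t by have := f_equal kgrp est; rewrite /= e1 !fg_mul1g.
apply: kelt_eq; last by rewrite /= fg_mulgV fg_mul1g st.
rewrite [RHS]kset_idem_mul ?kset_mulV //= ?fg_mulgV //.
apply: kclosure_min; first exact: kset_closed.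
by move=> y [->|->]; [apply: kset1 | rewrite st; apply: ksetg].
Qed.

Definition kelt_finvMon : FInvMon := {|
  fbase := kelt_invMon; fm := kmax; fm_sigma := kmax_sigma; fm_greatest := kmax_greatest |}.

Lemma kinv_prefix_elt g : kinv (prefix_elt g) = prefix_elt (fg_inv g).
Proof.
apply: kelt_eq => //=; apply: pred_ext => z; split; last exact: fg_prefix_inv.
by move=> gz; have := @fg_prefix_inv X (fg_inv g) (fg_mul g z); rewrite fg_invK fg_mulKg; apply.
Qed.

Lemma kmul_prefix_elt g h : reduced (fword g ++ fword h) ->
  kmul (prefix_elt g) (prefix_elt h) = prefix_elt (fg_mul g h).
Proof.
move=> r; apply: kelt_eq => //; apply: kclosure_id; first exact: kclosed_prefix.
  move=> z [zg|zh]; last by rewrite -(fg_mulKVg g z); apply: fg_prefix_mull.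
  by apply: fg_prefix_trans zg _; apply/prefixP; exists (fword h); rewrite fword_mul_cat.
by move=> z /fg_prefix_mul.
Qed.

Definition prefix_closed (n : kelt) : Prop := forall z, fg_prefix z (kgrp n) -> kset n z.

Lemma prefix_closed_mul a b : prefix_closed a -> prefix_closed b -> prefix_closed (kmul a b).
Proof. by move=> pa pb z /fg_prefix_mul [/pa|/pb]; [apply: kset_mull | apply: kset_mulr]. Qed.

Lemma prefix_closed_short n : fg_len (kgrp n) <= 1 -> prefix_closed n.
Proof. by move=> n1 z /(fg_prefix_short n1) [->|->]; [apply: kset1 | apply: ksetg]. Qed.

Lemma kmax_kgrp m n : kgrp m = kgrp n -> kmax m = kmax n.
Proof. by move=> mn; apply: kelt_eq; rewrite /= /kmax_set mn. Qed.

Lemma kmax_id n : fg_len (kgrp n) <= K -> (forall z, kset n z -> fg_prefix z (kgrp n)) ->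
  kmax n = n.
Proof.
move=> nK nz; apply: kelt_eq => //; apply: pred_ext => z; split; first exact: kmax_sub.
move=> /nz /geodesic1P; apply: (@kclosure_closed _ fg_one (kgrp n)).
- exact: kmax_set1.
- exact: kmax_setg.
- by rewrite fg_dist1g.
Qed.

Lemma kmax_not_prefix_closed n : maxn K 1 < fg_len (kgrp n) -> ~ prefix_closed (kmax n).
Proof.
rewrite gtn_max /fg_len => /andP[Kn n1] nc.
have [a [w ew]] : exists a w, fword (kgrp n) = a :: w.
  by case: (fword (kgrp n)) n1 => [|a w] //; exists a, w.
have an : fg_prefix (fg_letter a) (kgrp n) by rewrite /fg_prefix ew /= eqxx prefix0s.
have [/(f_equal (@fg_len X))|/(f_equal (@fg_len X))] :=
  kclosure_min (kclosed_pair Kn) (fun y yy => yy) (nc _ an); first by [].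
by rewrite /fg_len => e; rewrite -e in n1.
Qed.

End KClosedSets.

Section FreeInverseMonoid.
Variables (X : Type) (M : InvMon) (iota : X -> M).

Definition letter_val (a : letter X) : M := if a.2 then iinv (iota a.1) else iota a.1.
Definition word_val (w : seq (letter X)) : M :=
  foldr (fun a m => imul (letter_val a) m) (ione M) w.

Lemma word_val_cat u v : word_val (u ++ v) = imul (word_val u) (word_val v).
Proof. by elim: u => [|a u IH] /=; rewrite ?imul1l // IH imulA. Qed.

Lemma letter_val_inv a : letter_val (letter_inv a) = iinv (letter_val a).
Proof. by case: a => x [] //=; rewrite /letter_val /= iinvK. Qed.

Lemma word_val_inv w : word_val (word_inv w) = iinv (word_val w).
Proof.
elim: w => [|a w IH] /=; first by rewrite iinv1.
by rewrite -cat1s word_inv_cat word_val_cat IH /= imul1r letter_val_inv iinvM.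
Qed.

Lemma word_val_surj : is_free_inverse_monoid iota -> forall a, exists w, a = word_val w.
Proof.
move=> free; apply: (@free_invmon_ind _ (fun a => exists w, a = word_val w) _ _ _ _ _ free).
- by exists [::].
- by move=> _ _ [u ->] [v ->]; exists (u ++ v); rewrite word_val_cat.
- by move=> _ [u ->]; exists (word_inv u); rewrite word_val_inv.
- by move=> x; exists [:: (x, false)]; rewrite /= imul1r.
Qed.

Lemma word_val_cons_reduce a w : sigma_rel (word_val (a :: w)) (word_val (cons_reduce a w)).
Proof.
case: w => [|b w] /=; first exact: sigma_refl.
case: eqP => [->|_]; last exact: sigma_refl.
by rewrite letter_val_inv imulA; apply/sigma_idem_mul/idem_mulV.
Qed.

Lemma word_val_sigma_reduce w : sigma_rel (word_val w) (word_val (word_mul w [::])).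
Proof.
elim: w => [|a w IH] /=; first exact: sigma_refl.
exact: sigma_trans (sigma_mul2l _ IH) (word_val_cons_reduce _ _).
Qed.
End FreeInverseMonoid.

Section FreeInverseMonoidImages.
Variables (X : Type) (M : FInvMon) (iota : X -> M).
Hypothesis free : is_free_inverse_monoid iota.

Variable pi : M -> fg_invMon X.
Hypotheses (pi_morph : invmon_morph pi) (pi_iota : forall x, pi (iota x) = fg_letter (x, false)).

Lemma pi_letter_val a : pi (letter_val iota a) = fg_letter a.
Proof.
by case: a => x [] /=; rewrite /letter_val /= ?(morph_inv pi_morph) pi_iota //; apply: val_inj.
Qed.

Lemma pi_word_val w : pi (word_val iota w) = fg_reduce w.
Proof.
elim: w => [|a w IH] /=; first by rewrite (morph_one pi_morph); apply: val_inj.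
by rewrite (morph_mul pi_morph) pi_letter_val IH; apply: val_inj.
Qed.

Lemma pi_fm a : pi (fm a) = pi a.
Proof. by apply/esym/(morph_fg_sigma pi_morph)/fm_sigma. Qed.

Lemma word_val_le_fm a : nat_le (word_val iota (fword (pi a))) (fm a).
Proof.
have [w ->] := word_val_surj free a.
by rewrite pi_word_val; apply/fm_greatest/word_val_sigma_reduce.
Qed.

Variables (K : nat) (psi : M -> kelt_invMon X K).
Hypotheses (psi_morph : invmon_morph psi)
  (psi_iota : forall x, psi (iota x) = prefix_elt K (fg_letter (x, false))).

Lemma psi_letter_val a : psi (letter_val iota a) = prefix_elt K (fg_letter a).
Proof.
case: a => x [] /=; rewrite /letter_val /= ?(morph_inv psi_morph) psi_iota //.
by rewrite -[iinv _]/(kinv _) kinv_prefix_elt; congr prefix_elt; apply: val_inj.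
Qed.

Lemma psi_word_val u (ru : reduced u) : psi (word_val iota u) = prefix_elt K (FGroup ru).
Proof.
elim: u ru => [|a u IH] ru /=.
  by rewrite (morph_one psi_morph); congr prefix_elt; apply: val_inj.
rewrite (morph_mul psi_morph) psi_letter_val (IH (reduced_consr ru)).
rewrite -[imul _ _]/(kmul _ _) kmul_prefix_elt //.
by congr prefix_elt; apply: val_inj; rewrite /= cons_reduce_id.
Qed.

Lemma kgrp_psi a : kgrp (psi a) = pi a.
Proof.
apply: (free_morph_ext free (morph_comp psi_morph (kgrp_morph X K)) pi_morph) => x.
by rewrite /= psi_iota pi_iota.
Qed.

Lemma psi_fm_short a : fg_len (pi a) <= K -> psi (fm a) = kmax (psi a).
Proof.
move=> aK; have grp : kgrp (psi (fm a)) = pi a by rewrite kgrp_psi pi_fm.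
rewrite -(@kmax_kgrp _ _ (psi (fm a))) ?grp ?kgrp_psi //; symmetry.
apply: kmax_id; rewrite grp // => z /(kset_nat_le (morph_nat_le psi_morph (word_val_le_fm a))).
by rewrite (psi_word_val (fword_reduced (pi a))).
Qed.
End FreeInverseMonoidImages.

Section Presentation.
Variables (Y : eqType) (R : seq (imterm Y * imterm Y)) (M : FInvMon) (phi : fterm Y -> M).

Definition fm_words (p : imterm Y) : seq (word Y) := unzip1 p.2.
Definition rel_fm_words : seq (word Y) := flatten [seq fm_words r.1 ++ fm_words r.2 | r <- R].

Hypothesis pres : finv_pres_iso R phi.

Lemma phi_mul a b : phi (tmul a b) = imul (phi a) (phi b). Proof. by case: pres. Qed.
Lemma phi_one : phi tone = ione M. Proof. by case: pres => _ []. Qed.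
Lemma phi_inv a : phi (tinv a) = iinv (phi a). Proof. by case: pres => _ [_ []]. Qed.
Lemma phi_fm a : phi (tm a) = fm (phi a). Proof. by case: pres => _ [_ [_ []]]. Qed.
Lemma phi_eqP s t : phi s = phi t <-> finv_cong R s t.
Proof. by case: pres => _ [_ [_ [_ []]]]. Qed.
Lemma phi_surj m : exists t, phi t = m. Proof. by case: pres => _ [_ [_ [_ []]]]. Qed.

Variables (N : FInvMon) (h : M -> N).
Hypotheses (h_morph : invmon_morph h)
  (h_fm : forall w, w \in rel_fm_words -> h (fm (phi (word_term w))) = fm (h (phi (word_term w)))).
Local Notation v := (fun y => h (phi (tvar y))).

Lemma feval_word_term w : feval v (word_term w) = h (phi (word_term w)).
Proof.
elim: w => [|[y b] w IH] /=; first by rewrite phi_one (morph_one h_morph).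
rewrite phi_mul (morph_mul h_morph) IH /letter_term /=.
by case: b => //=; rewrite phi_inv (morph_inv h_morph).
Qed.

Lemma feval_im_to_term p : {subset fm_words p <= rel_fm_words} ->
  feval v (im_to_term p) = h (phi (im_to_term p)).
Proof.
case: p => u l; rewrite /fm_words /im_to_term /= => lR.
rewrite phi_mul (morph_mul h_morph) feval_word_term; congr imul.
elim: l lR => [|[w u'] l IH] /= lR; first by rewrite phi_one (morph_one h_morph).
rewrite !phi_mul !(morph_mul h_morph) phi_fm h_fm ?lR ?mem_head // !feval_word_term IH //.
by move=> x xl; apply: lR; rewrite inE xl orbT.
Qed.

Lemma feval_phi_eq s t : phi s = phi t -> feval v s = feval v t.
Proof.
move/phi_eqP; apply=> r rR.
have rsub : {subset fm_words r.1 ++ fm_words r.2 <= rel_fm_words}.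
  by move=> w wr; apply/flatten_mapP; exists r.
rewrite !feval_im_to_term => [|w wr|w wr]; try by apply: rsub; rewrite mem_cat wr ?orbT.
by congr h; apply/phi_eqP => N' v' Rv'; apply: Rv'.
Qed.
End Presentation.

Section BoundedPresentation.
Variables (X : Type) (Y : finType) (R : seq (imterm Y * imterm Y)).
Variables (M : FInvMon) (iota : X -> M) (phi : fterm Y -> M).
Hypotheses (free : is_free_inverse_monoid iota) (pres : finv_pres_iso R phi).
Variables (pi : M -> fg_invMon X) (K : nat) (psi : M -> kelt_invMon X K).
Hypotheses (pi_morph : invmon_morph pi) (pi_iota : forall x, pi (iota x) = fg_letter (x, false)).
Hypotheses (psi_morph : invmon_morph psi)
  (psi_iota : forall x, psi (iota x) = prefix_elt K (fg_letter (x, false))).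
Hypothesis K_bound : forall w, w \in rel_fm_words R -> fg_len (pi (phi (word_term w))) <= K.
Local Notation v := (fun y => psi (phi (tvar y)) : kelt_finvMon X K).

Lemma feval_psi_eq s t : phi s = phi t -> feval v s = feval v t.
Proof.
apply: (feval_phi_eq (N := kelt_finvMon X K) pres psi_morph) => w wR.
exact: (psi_fm_short free pi_morph pi_iota psi_morph psi_iota (K_bound wR)).
Qed.

Lemma kgrp_feval t : kgrp (feval v t) = pi (phi t).
Proof.
elim: t => [y|a IHa b IHb||a IH|a IH] /=.
- exact: (kgrp_psi free pi_morph pi_iota psi_morph psi_iota).
- by rewrite IHa IHb (phi_mul pres) (morph_mul pi_morph).
- by rewrite (phi_one pres) (morph_one pi_morph).
- by rewrite IH (phi_inv pres) (morph_inv pi_morph).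
- by rewrite IH (phi_fm pres) (pi_fm pi_morph).
Qed.

Lemma feval_prefix_closed w t : phi t = word_val iota w -> prefix_closed (feval v t).
Proof.
elim: w t => [|a w IH] t /= et.
  by rewrite (@feval_psi_eq t tone) ?(phi_one pres) //; apply: prefix_closed_short.
have [ta eta] := phi_surj pres (letter_val iota a).
have [tw etw] := phi_surj pres (word_val iota w).
rewrite (@feval_psi_eq t (tmul ta tw)) /=; last by rewrite (phi_mul pres) eta etw.
apply: prefix_closed_mul (IH _ etw).
by apply: prefix_closed_short; rewrite kgrp_feval eta pi_letter_val.
Qed.
End BoundedPresentation.

Theorem mainTheorem13 (X : Type) (x0 : X) :
  ~ exists (Y : finType) (R : seq (imterm Y * imterm Y))
      (M : FInvMon) (iota : X -> M) (phi : fterm Y -> M),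
      is_free_inverse_monoid iota /\ finv_pres_iso R phi.
Proof.
case=> Y [R [M [iota [phi [free pres]]]]].
have [[pi [pi_morph pi_iota]] _] := free (fg_invMon X) (fun x => fg_letter (x, false)).
pose K := \max_(w <- rel_fm_words R) fg_len (pi (phi (word_term w))).
have K_bound w : w \in rel_fm_words R -> fg_len (pi (phi (word_term w))) <= K.
  by move=> wR; apply: leq_bigmax_seq.
have [[psi [psi_morph psi_iota]] _] :=
  free (kelt_invMon X K) (fun x => prefix_elt K (fg_letter (x, false))).
pose g := nseq K.+2 ((x0, false) : letter X).
have [t et] := phi_surj pres (word_val iota g).
have [w ew] := word_val_surj free (fm (phi t)).
pose v y : kelt_finvMon X K := psi (phi (tvar y)).
apply: (@kmax_not_prefix_closed _ K (feval v t)).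
  rewrite (kgrp_feval free pres pi_morph pi_iota psi_morph psi_iota) et pi_word_val //.
  change (maxn K 1 < size (word_mul g [::])).
  by rewrite word_mul_nil ?reduced_nseq // size_nseq gtn_max !ltnS leqnSn.
apply: (feval_prefix_closed free pres pi_morph pi_iota psi_morph psi_iota K_bound (t := tm t)).
by rewrite (phi_fm pres) ew.
Qed.
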